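(* Let $T$ be a tree on $n\ge 2$ vertices, let $k\ge 2$, and let $M$ be the order-$k$ Steiner distance hypermatrix of $T$. For any vector $\mathbf{c}\in\mathbb{R}^n$ write $C=\mathbf{c}^T\mathbb{J}=\sum_{i=1}^n c_i$ and, for each edge $e\in E(T)$, $\alpha_e=\mathbf{c}^T\mathbf{a}_e=\sum_{i\in A(e)}c_i$. Then $$M(\mathbf{c},\ldots,\mathbf{c})=\sum_{e\in E(T)}\left(C^k-\alpha_e^k-(C-\alpha_e)^k\right).$$
   Context: $T$ is a tree with vertex set $\{1,\dots,n\}$ and edge set $E(T)$. For $U\subseteq V(T)$, the Steiner distance $S(U)$ is the minimum number of edges of a connected subgraph of $T$ whose vertex set contains $U$. The order-$k$ Steiner distance hypermatrix $M$ of $T$ has entries $M_{(i_1,\dots,i_k)}=S(\{i_1,\dots,i_k\})$ for $(i_1,\dots,i_k)\in V(T)^k$, and for vectors $\mathbf{x}_1,\dots,\mathbf{x}_k\in\mathbb{R}^n$ one writes $M(\mathbf{x}_1,\dots,\mathbf{x}_k)=\sum_{\mathbf{i}\in V(T)^k}M_{\mathbf{i}}\prod_{j=1}^k x_{j i_j}$, where $x_{ji}$ is the $i$-th component of $\mathbf{x}_j$. For an edge $e$, $A(e)$ and $B(e)$ are the vertex sets of the two components of $T-e$ (labeled arbitrarily), and $\mathbf{a}_e\in\mathbb{R}^n$ is the indicator vector of $A(e)$. $\mathbb{J}$ denotes the all-ones vector in $\mathbb{R}^n$. *)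

From HB Require Import structures.
From mathcomp Require Import all_boot all_order all_algebra.
Set Implicit Arguments. Unset Strict Implicit. Unset Printing Implicit Defensive.
Import Order.TTheory GRing.Theory Num.Theory.

(* A simple graph on the vertex set 'I_n (= {0,...,n-1}, standing for {1,...,n})
   is given by an adjacency relation adj : rel 'I_n. *)

Definition is_simple_graph (n : nat) (adj : rel 'I_n) : Prop :=
  irreflexive adj /\ symmetric adj.

Definition edges (n : nat) (adj : rel 'I_n) : {set {set 'I_n}} :=
  [set [set x; y] | x in 'I_n, y in 'I_n & adj x y].

Definition connected_graph (n : nat) (adj : rel 'I_n) : Prop :=
  forall x y : 'I_n, connect adj x y.

Definition acyclic (n : nat) (adj : rel 'I_n) : Prop :=
  forall c : seq 'I_n, 3 <= size c -> uniq c -> ~~ cycle adj c.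

Definition is_tree (n : nat) (adj : rel 'I_n) : Prop :=
  is_simple_graph adj /\ connected_graph adj /\ acyclic adj.

Definition conn_subgraph_containing (n : nat) (adj : rel 'I_n)
    (U : {set 'I_n}) (p : {set 'I_n} * {set {set 'I_n}}) : bool :=
  let W := p.1 in let F := p.2 in
  [&& U \subset W, F \subset edges adj,
      [forall f in F, f \subset W] &
      [forall x in W, forall y in W,
          connect (fun u v => [set u; v] \in F) x y]].

(* Steiner distance S(U): minimum number of edges of a connected subgraph of
   the graph whose vertex set contains U.  (The default value #|E(T)| of the
   min is attained by the whole tree, which is always feasible.) *)
Definition steiner (n : nat) (adj : rel 'I_n) (U : {set 'I_n}) : nat :=
  \big[minn/#|edges adj|]_(p | conn_subgraph_containing adj U p) #|p.2|.

Definition steiner_form (R : ringType) (n k : nat) (adj : rel 'I_n)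
    (c : 'I_n -> R) : R :=
  \sum_(i : {ffun 'I_k -> 'I_n})
     ((steiner adj [set i j | j : 'I_k])%:R * \prod_(j < k) c (i j))%R.

Definition remove_edge (n : nat) (adj : rel 'I_n) (f : {set 'I_n}) : rel 'I_n :=
  fun x y => adj x y && ([set x; y] != f).

(* A is a valid labelling of the components: for each edge f, A f is the
   vertex set of one of the two components of T - f (the component of one of
   the endpoints of f). *)
Definition side_labelling (n : nat) (adj : rel 'I_n)
    (A : {set 'I_n} -> {set 'I_n}) : Prop :=
  forall f, f \in edges adj ->
    exists2 x, x \in f & A f = [set y | connect (remove_edge adj f) x y].

From HB Require Import structures.
From mathcomp Require Import all_boot all_order all_algebra.
Import Order.TTheory GRing.Theory Num.Theory.

(* In a tree, the smallest connected subgraph containing a nonempty vertex set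
   U uses exactly the edges e that separate U, i.e. such that U meets both
   sides A(e) and B(e) of T - e: such an edge lies on the path between two
   vertices of U on opposite sides, and conversely every edge on a path
   between two vertices of U separates them.  Hence S(U) is the number of
   edges separating U, and exchanging the sums over tuples and edges,
   M(c,...,c) is the sum over e of the weight of the k-tuples whose image
   meets both sides of e, which is C^k - alpha_e^k - (C - alpha_e)^k. *)

Set Implicit Arguments.
Unset Strict Implicit.
Unset Printing Implicit Defensive.

Definition separates (T : finType) (B U : {set T}) : bool :=
  ~~ (U \subset B) && ~~ (U \subset ~: B).

Lemma separatesP (T : finType) (B U : {set T}) :
  reflect (exists x y, [/\ x \in U, y \in U, x \in B & y \notin B])
          (separates B U).
Proof.
apply: (iffP andP) => [[/subsetPn[y yU yB] /subsetPn[x xU]]|[x [y [xU yU xB yB]]]].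
  by rewrite inE negbK => xB; exists x, y.
by split; apply/subsetPn; [exists y | exists x; rewrite ?inE ?negbK].
Qed.

Lemma separatesS (T : finType) (B U V : {set T}) :
  U \subset V -> separates B U -> separates B V.
Proof.
move=> /subsetP UV /separatesP[x [y [xU yU xB yB]]].
by apply/separatesP; exists x, y; rewrite !UV.
Qed.

Lemma separates_pair (T : finType) (B : {set T}) x y :
  separates B [set x; y] = ((x \in B) != (y \in B)).
Proof.
by rewrite /separates !subUset !sub1set !inE; case: (x \in B); case: (y \in B).
Qed.

Section SimpleGraph.

Variables (n : nat) (adj : rel 'I_n).

Lemma path_remove_edge (g : {set 'I_n}) w x p :
  w \in g -> w \notin x :: p -> path adj x p -> path (remove_edge adj g) x p.
Proof.
move=> wg wp; apply: (@sub_in_path _ (predC1 w)); last first.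
  by apply/allP=> y yp /=; apply: contraNneq wp => <-.
move=> y z yw zw ayz; rewrite /remove_edge ayz /=.
apply: contraTneq wg => <-; move: yw zw.
by rewrite !inE negb_or ![w == _]eq_sym => -> ->.
Qed.

Hypothesis adj_simple : is_simple_graph adj.

Lemma mem_edges x y : ([set x; y] \in edges adj) = adj x y.
Proof.
have [adj_irr adj_sym] := adj_simple.
apply/idP/idP => [/imset2P[a b _]|xy]; last first.
  by apply/imset2P; exists x y; rewrite ?inE.
rewrite inE /= => ab exy.
have nab : a != b by apply: contraTneq ab => ->; rewrite adj_irr.
have [xab yab] : x \in [set a; b] /\ y \in [set a; b] by rewrite -exy set21 set22.
have [axy bxy] : a \in [set x; y] /\ b \in [set x; y] by rewrite exy set21 set22.
move: axy bxy; case/set2P: xab => ->; case/set2P: yab => -> /set2P aE /set2P bE //.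
- by case: bE => bE; rewrite bE eqxx in nab.
- by rewrite adj_sym.
- by case: aE => aE; rewrite aE eqxx in nab.
Qed.

Lemma remove_edge_sym g : symmetric (remove_edge adj g).
Proof. by move=> x y; rewrite /remove_edge setUC (proj2 adj_simple). Qed.

End SimpleGraph.

Section Tree.

Variables (n : nat) (adj : rel 'I_n).
Hypothesis adj_tree : is_tree adj.

Let adj_simple : is_simple_graph adj := proj1 adj_tree.

Lemma tree_uniq_path u v :
  exists p, [/\ path adj u p, uniq (u :: p) & last u p = v].
Proof.
have /connectP[p Pp ->] := proj1 (proj2 adj_tree) u v.
by case/shortenP: Pp => q Pq Uq _; exists q.
Qed.

Lemma tree_edge_bridge s t :
  adj s t -> ~~ connect (remove_edge adj [set s; t]) s t.
Proof.
have [[adj_irr adj_sym] [_ adj_acyclic]] := adj_tree.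
move=> st; apply/negP => /connectP[p Pp Et].
case/shortenP: Pp Et => q Pq Uq _ Et.
have Pq_adj : path adj s q by apply: sub_path Pq => a b /andP[].
case: q Pq Uq Et Pq_adj => [|y [|z q]] Pq Uq Et Pq_adj.
- by rewrite Et adj_irr in st.
- by move: Pq; rewrite Et /= /remove_edge eqxx andbF.
- have /negP := adj_acyclic [:: s, y, z & q] isT Uq; apply.
  by rewrite [cycle _ _]/cycle rcons_path Pq_adj -Et adj_sym.
Qed.

Section Sides.

Variable A : {set 'I_n} -> {set 'I_n}.
Hypothesis A_sides : side_labelling adj A.

Definition sep_edges (U : {set 'I_n}) : {set {set 'I_n}} :=
  [set g in edges adj | separates (A g) U].

Definition sep_edge (U : {set 'I_n}) : rel 'I_n :=
  fun s t => [set s; t] \in sep_edges U.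

Lemma side_connect g u v : g \in edges adj ->
  connect (remove_edge adj g) u v -> (u \in A g) = (v \in A g).
Proof.
have sym := sym_connect_sym (remove_edge_sym adj_simple g).
move=> /A_sides[x _ ->] uv; rewrite !inE.
by apply/idP/idP => xw; apply: connect_trans xw _; rewrite // sym.
Qed.

Lemma edge_ends_sides s t : adj s t ->
  (s \in A [set s; t]) != (t \in A [set s; t]).
Proof.
move=> st; have := tree_edge_bridge st.
have := remove_edge_sym adj_simple [set s; t] => /sym_connect_sym sym.
have /A_sides[x /set2P[]-> ->] : [set s; t] \in edges adj by rewrite mem_edges.
  by rewrite !inE connect0 => /negbTE->.
by rewrite !inE connect0 sym => /negbTE->.
Qed.

Lemma path_sep_edge x p : path adj x p -> uniq (x :: p) ->
  path (sep_edge [set x; last x p]) x p.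
Proof.
elim: p x => //= y p IH x /andP[xy yp] /andP[xNyp yp_uniq].
have xy_sides := edge_ends_sides xy.
apply/andP; split.
  rewrite /sep_edge inE mem_edges // xy separates_pair /=.
  rewrite -(@side_connect _ y (last y p)) ?mem_edges //.
  apply/connectP; exists p => //.
  by apply: (path_remove_edge (w := x)); rewrite ?set21.
apply: (sub_in_path (P := mem (y :: p))) (IH y yp yp_uniq); last exact/allP.
move=> s t sp tp; rewrite /sep_edge !inE => /andP[st_edge].
rewrite st_edge !separates_pair (@side_connect _ x y) //.
apply: connect1; rewrite /remove_edge xy /=.
apply: contraTneq (set21 x y) => ->; rewrite !inE.
by apply/norP; split; apply: contraNneq xNyp => ->.
Qed.

Lemma sep_connect_path (U : {set 'I_n}) u p w :
  path adj u p -> uniq (u :: p) -> u \in U -> last u p \in U ->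
  w \in u :: p -> connect (sep_edge U) u w.
Proof.
move=> Pp Up uU vU; apply: path_connect; apply: sub_path (path_sep_edge Pp Up).
move=> s t; rewrite /sep_edge !inE => /andP[-> /=].
by apply: separatesS; rewrite subUset !sub1set uU vU.
Qed.

Lemma sep_edges_subset (U W : {set 'I_n}) F :
  conn_subgraph_containing adj U (W, F) -> sep_edges U \subset F.
Proof.
case/and4P => /= /subsetP UW FE _ /forall_inP W_conn.
apply/subsetP => g; rewrite inE => /andP[gE /separatesP[u [v [uU vU uA]]]].
apply: contraNT => gNF; rewrite -(side_connect gE (u := u)) //.
have /forall_inP/(_ v (UW _ vU)) := W_conn u (UW _ uU).
apply: connect_sub => y z yzF; apply: connect1.
rewrite /remove_edge -(mem_edges adj_simple) (subsetP FE _ yzF) /=.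
by apply: contraNneq gNF => <-.
Qed.

Lemma sep_edges_feasible (U : {set 'I_n}) u0 : u0 \in U ->
  conn_subgraph_containing adj U
    ([set y | connect (sep_edge U) u0 y], sep_edges U).
Proof.
move=> u0U.
have sep_sym : connect_sym (sep_edge U).
  by apply: sym_connect_sym => x y; rewrite /sep_edge setUC.
have reach u w p : path adj u p -> uniq (u :: p) -> u \in U ->
    last u p \in U -> w \in u :: p -> connect (sep_edge U) u0 w.
  move=> Pp Up uU vU wp; apply: connect_trans (sep_connect_path Pp Up uU vU wp).
  have [q [Pq Uq Eq]] := tree_uniq_path u0 u.
  by apply: (sep_connect_path Pq Uq u0U); rewrite ?Eq // -Eq mem_last.
apply/and4P; split => /=.
- apply/subsetP => v vU; rewrite inE.
  have [p [Pp Up Ev]] := tree_uniq_path u0 v.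
  by apply: (reach u0 v p); rewrite ?Ev // -Ev mem_last.
- by apply/subsetP => g; rewrite inE => /andP[].
- apply/forall_inP => g; rewrite inE => /andP[gE /separatesP[u [v [uU vU uA vA]]]].
  have [p [Pp Up Ev]] := tree_uniq_path u v.
  apply/subsetP => w wg; rewrite inE.
  apply: (reach u w p) => //; first by rewrite Ev.
  apply: contraLR vA => wNp; rewrite negbK -(side_connect gE (u := u)) //.
  by rewrite -Ev; apply/connectP; exists p => //; apply: path_remove_edge wg wNp Pp.
- apply/forall_inP => x; rewrite inE => u0x; apply/forall_inP => y; rewrite inE.
  by apply: connect_trans; rewrite sep_sym.
Qed.

Lemma steiner_tree (U : {set 'I_n}) :
  U != set0 -> steiner adj U = #|sep_edges U|.
Proof.
case/set0Pn => u0 u0U; apply/eqP; rewrite eqn_leq; apply/andP; split.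
  rewrite /steiner -minEnat -leEnat.
  exact: bigmin_le_cond (sep_edges_feasible u0U).
apply: (@le_bigmin _ nat) => [|[W F] /sep_edges_subset]; last exact: subset_leq_card.
by apply/subset_leq_card/subsetP => g; rewrite inE => /andP[].
Qed.

End Sides.

End Tree.

Local Open Scope ring_scope.

Lemma sum_prod_image_subset (R : comPzSemiRingType) (I T : finType)
    (c : T -> R) (D : {set T}) :
  \sum_(f : {ffun I -> T} | [set f i | i : I] \subset D) \prod_i c (f i)
    = (\sum_(x in D) c x) ^+ #|I|.
Proof.
rewrite -prodr_const bigA_distr_big; apply: eq_bigl => f.
apply/subsetP/familyP => [fD i | fD _ /imsetP[i _ ->]]; last exact: fD.
by apply: fD; apply: imset_f.
Qed.

Lemma sum_prod_image_separates (R : comPzRingType) (I T : finType)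
    (c : T -> R) (B : {set T}) : (0 < #|I|)%N ->
  \sum_(f : {ffun I -> T} | separates B [set f i | i : I]) \prod_i c (f i)
    = (\sum_x c x) ^+ #|I| - (\sum_(x in B) c x) ^+ #|I|
      - (\sum_(x in ~: B) c x) ^+ #|I|.
Proof.
case/card_gt0P => i0 _.
set im := fun f : {ffun I -> T} => [set f i | i : I].
have im_compl f : im f \subset ~: B -> ~~ (im f \subset B).
  have fi0 : f i0 \in im f by apply: imset_f.
  move=> /subsetP/(_ _ fi0); rewrite inE => fi0B.
  by apply/subsetPn; exists (f i0).
have -> : \sum_x c x = \sum_(x in [set: T]) c x by apply: eq_bigl => x; rewrite inE.
rewrite -!sum_prod_image_subset; apply/eqP; rewrite eq_sym !subr_eq; apply/eqP.
rewrite (bigID (fun f => im f \subset B)) /= addrC; congr (_ + _); last first.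
  by apply: eq_bigl => f; rewrite subsetT.
rewrite (bigID (fun f => im f \subset ~: B)) /= addrC; congr (_ + _).
  by apply: eq_bigl => f; rewrite subsetT.
apply: eq_bigl => f; rewrite subsetT /=.
by apply/idP/idP => [/andP[] // | fNB]; rewrite fNB im_compl.
Qed.

Theorem theorem1 (R : realFieldType) (n k : nat) (adj : rel 'I_n)
    (A : {set 'I_n} -> {set 'I_n}) (c : 'I_n -> R) :
  (2 <= n)%N -> (2 <= k)%N -> is_tree adj -> side_labelling adj A ->
  let C := \sum_(i < n) c i in
  steiner_form k adj c =
    \sum_(f in edges adj)
       (C ^+ k - (\sum_(i in A f) c i) ^+ k - (C - \sum_(i in A f) c i) ^+ k).
Proof.
move=> _ k_ge2 adj_tree A_sides C.
have k_gt0 : (0 < #|'I_k|)%N by rewrite card_ord ltnW.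
have image_neq0 (i : {ffun 'I_k -> 'I_n}) : [set i j | j : 'I_k] != set0.
  by case/card_gt0P: k_gt0 => j _; apply/set0Pn; exists (i j); apply: imset_f.
have C_compl (B : {set 'I_n}) : C - \sum_(i in B) c i = \sum_(i in ~: B) c i.
  rewrite /C (bigID (mem B)) /= addrAC subrr add0r.
  by apply: eq_bigl => i; rewrite inE.
transitivity (\sum_(i : {ffun 'I_k -> 'I_n})
    \sum_(g in edges adj | separates (A g) [set i j | j : 'I_k])
      \prod_(j < k) c (i j)).
  apply: eq_bigr => i _; rewrite (steiner_tree adj_tree A_sides (image_neq0 i)).
  by rewrite mulr_natl -sumr_const; apply: eq_bigl => g; rewrite inE.
rewrite (exchange_big_dep (mem (edges adj))) /=; last by move=> i g _ /andP[].
apply: eq_bigr => g g_edge; rewrite C_compl -[in RHS](card_ord k).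
by rewrite -sum_prod_image_separates //; apply: eq_bigl => i; rewrite g_edge.
Qed.
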